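(* Let $T$ be a decomposition tree of a distance-hereditary graph $G$, and let $v$ be an internal node of $T$ labeled $\otimes$ with left child $v_l$ and right child $v_r$, such that property (P) holds at $v_l$ and at $v_r$. Then $\hat\beta(v)=\hat\beta(v_l)+\hat\beta(v_r)$.
   Context: All graphs are finite, simple, undirected. For a graph $H$ and $S\subseteq V(H)$, $N_H[S]$ is $S$ together with all vertices adjacent to a vertex of $S$, and $H[S]$ is the induced subgraph. Graphs carry a ''twin set'': a single-vertex graph on $x$ has twin set $\{x\}$. For vertex-disjoint graphs $G_l,G_r$ with twin sets $TS(G_l),TS(G_r)$: the true twin operation $G_l\otimes G_r$ has vertex set $V(G_l)\cup V(G_r)$, edge set $E(G_l)\cup E(G_r)\cup\{uw: u\in TS(G_l), w\in TS(G_r)\}$ and twin set $TS(G_l)\cup TS(G_r)$; the false twin operation $G_l\odot G_r$ has vertex set $V(G_l)\cup V(G_r)$, edge set $E(G_l)\cup E(G_r)$, twin set $TS(G_l)\cup TS(G_r)$; the attachment operation $G_l\oplus G_r$ has the same vertex and edge sets as $G_l\otimes G_r$ and twin set $TS(G_l)$. A decomposition tree $T$ of $G$ is a rooted binary tree whose leaves are in bijection with $V(G)$, each internal node having a left and a right child and a label in $\{\otimes,\odot,\oplus\}$; for each node $v$ define $\hat G(v)$ and $\hat{TS}(v)$ recursively: for a leaf $x$, the single-vertex graph on $x$ with twin set $\{x\}$; for an internal node $v$ with label $\circ$ and children $v_l,v_r$, $\hat G(v)=\hat G(v_l)\circ\hat G(v_r)$ with the corresponding twin set; one requires $\hat G(\text{root})=G$.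 Then $\hat G(v)$ is the subgraph of $G$ induced by the set $\hat V(v)$ of leaves below $v$. For a node $u$ and $0\le k\le|\hat{TS}(u)|$, call $S\subseteq\hat V(u)$ $k$-feasible if $\hat V(u)\setminus\hat{TS}(u)\subseteq N_{\hat G(u)}[S]$ and there is $X\subseteq S\cap\hat{TS}(u)$ with $|X|=k$ such that $\hat G(u)[S\setminus X]$ has a perfect matching. $\hat\gamma_k(u)$ is the minimum size of a $k$-feasible set. $\hat{min}(u)=\min\{\hat\gamma_k(u):0\le k\le|\hat{TS}(u)|\}$, and $\hat\alpha(u)$, $\hat\beta(u)$ are the smallest and the largest $k$ with $\hat\gamma_k(u)=\hat{min}(u)$. Property (P) holds at $u$ if for every $0\le k\le|\hat{TS}(u)|$: $\hat\gamma_k(u)=\hat{min}(u)+\hat\alpha(u)-k$ when $k\le\hat\alpha(u)$; $\hat\gamma_k(u)=\hat{min}(u)+k-\hat\beta(u)$ when $k\ge\hat\beta(u)$; $\hat\gamma_k(u)=\hat{min}(u)$ when $\hat\alpha(u)<k<\hat\beta(u)$ and $k-\hat\alpha(u)$ is even; and $\hat\gamma_k(u)=\hat{min}(u)+1$ otherwise. *)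

From mathcomp Require Import all_boot.
Set Implicit Arguments. Unset Strict Implicit. Unset Printing Implicit Defensive.

Definition simple_graph (T : finType) (G : rel T) : Prop :=
  (forall x, ~~ G x x) /\ (forall x y, G x y = G y x).

(** [dist_le G W x y n]: in the induced subgraph G[W] there is an x-y walk
    of length at most n (x is assumed to lie in W). *)
Definition dist_le (T : finType) (G : rel T) (W : {set T}) (x y : T) (n : nat) : Prop :=
  exists p : seq T, [&& path G x p, last x p == y, all (fun z => z \in W) p
                      & size p <= n].

Definition dist_hereditary (T : finType) (G : rel T) : Prop :=
  forall W : {set T},
    (forall x y, x \in W -> y \in W -> exists n, dist_le G W x y n) ->
    forall x y n, x \in W -> y \in W ->
      dist_le G [set: T] x y n -> dist_le G W x y n.

(** Labels: true twin (otimes), false twin (odot), attachment (oplus). *)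
Inductive op := Otimes | Odot | Oplus.

Inductive dtree (T : finType) :=
| Leaf of T
| Node of op & dtree T & dtree T.
Arguments Leaf {T}.
Arguments Node {T}.

Fixpoint leaves (T : finType) (t : dtree T) : seq T :=
  match t with Leaf x => [:: x] | Node _ l r => leaves l ++ leaves r end.

Definition hatV (T : finType) (t : dtree T) : {set T} := [set x in leaves t].

Fixpoint hatTS (T : finType) (t : dtree T) : {set T} :=
  match t with
  | Leaf x => [set x]
  | Node Otimes l r => hatTS l :|: hatTS r
  | Node Odot l r => hatTS l :|: hatTS r
  | Node Oplus l _ => hatTS l
  end.

Fixpoint hatE (T : finType) (t : dtree T) : rel T :=
  match t with
  | Leaf _ => fun _ _ => false
  | Node o l r => fun x y =>
      [|| hatE l x y, hatE r x y |
        (if o is Odot then false else true) &&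
        (((x \in hatTS l) && (y \in hatTS r)) || ((y \in hatTS l) && (x \in hatTS r)))]
  end.

Fixpoint is_node (T : finType) (v t : dtree T) : Prop :=
  v = t \/ match t with Leaf _ => False | Node _ l r => is_node v l \/ is_node v r end.

Definition decomp_tree (T : finType) (G : rel T) (t : dtree T) : Prop :=
  uniq (leaves t) /\ (forall x : T, x \in leaves t) /\
  (forall x y : T, hatE t x y = G x y).

Definition closed_nbhd (T : finType) (e : rel T) (V S : {set T}) : {set T} :=
  S :|: [set x in V | [exists y in S, e x y]].

Definition has_perfect_matching (T : finType) (e : rel T) (W : {set T}) : bool :=
  [exists M : {set {set T}},
    partition M W &&
    [forall m in M, exists x, exists y, [&& x != y, e x y & m == [set x; y]]]].

Definition feasible (T : finType) (u : dtree T) (k : nat) (S : {set T}) : bool :=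
  [&& S \subset hatV u,
      (hatV u :\: hatTS u) \subset closed_nbhd (hatE u) (hatV u) S &
      [exists X : {set T}, [&& X \subset S :&: hatTS u, #|X| == k &
                             has_perfect_matching (hatE u) (S :\: X)]]].

(** \hat\gamma_k(u): minimum size of a k-feasible set (#|T|.+1, i.e.
    "infinity", if there is none). *)
Definition gammak (T : finType) (u : dtree T) (k : nat) : nat :=
  \big[minn/#|T|.+1]_(S : {set T} | feasible u k S) #|S|.

Definition hmin (T : finType) (u : dtree T) : nat :=
  \big[minn/#|T|.+1]_(k < #|hatTS u|.+1) gammak u k.

Definition halpha (T : finType) (u : dtree T) : nat :=
  \big[minn/#|hatTS u|]_(k < #|hatTS u|.+1 | gammak u k == hmin u) (k : nat).

Definition hbeta (T : finType) (u : dtree T) : nat :=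
  \max_(k < #|hatTS u|.+1 | gammak u k == hmin u) (k : nat).

Definition propP (T : finType) (u : dtree T) : Prop :=
  forall k, k <= #|hatTS u| ->
    [/\ k <= halpha u -> gammak u k = hmin u + (halpha u - k),
        hbeta u <= k -> gammak u k = hmin u + (k - hbeta u),
        halpha u < k < hbeta u -> ~~ odd (k - halpha u) -> gammak u k = hmin u &
        halpha u < k < hbeta u -> odd (k - halpha u) -> gammak u k = (hmin u).+1].

(* At a true-twin node v = l (x) r, feasible sets of the children combine and
   feasible sets of v split.  A k1-feasible set of l and a k2-feasible set of r
   have a (k1 + k2)-feasible union.  Conversely a k-feasible set S of v restricts
   to a k1-feasible S :&: V(l) and a k2-feasible S :&: V(r) with k <= k1 + k2:
   a matching edge crossing from V(l) to V(r) joins two twins, which can simply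
   be declared unmatched on either side.  Since every node has a 0-feasible set,
   all minima are finite; hence min(v) = min(l) + min(r), a minimum set of v
   realising beta(v) splits into minimum sets of l and r, and the union of minimum
   sets realising beta(l) and beta(r) is a minimum set of v. *)

From mathcomp Require Import all_boot all_order zify.
Set Implicit Arguments. Unset Strict Implicit. Unset Printing Implicit Defensive.

Lemma cardsU_disjoint (T : finType) (A B : {set T}) :
  [disjoint A & B] -> #|A :|: B| = #|A| + #|B|.
Proof. by move=> dAB; rewrite cardsU disjoint_setI0 // cards0 subn0. Qed.

Lemma card_setI_split (T : finType) (A B C : {set T}) :
  A \subset B :|: C -> [disjoint B & C] -> #|A| = #|A :&: B| + #|A :&: C|.
Proof.
move=> sA dBC; rewrite -cardsU_disjoint -?setIUr ?(setIidPl sA) //.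
exact: disjointW (subsetIr _ _) (subsetIr _ _) dBC.
Qed.

Lemma setDUU (T : finType) (A1 A2 B1 B2 : {set T}) :
  [disjoint A1 & B2] -> [disjoint A2 & B1] ->
  (A1 :|: A2) :\: (B1 :|: B2) = (A1 :\: B1) :|: (A2 :\: B2).
Proof.
move=> d12 d21; apply/setP => x; rewrite !inE.
case A1x: (x \in A1); case A2x: (x \in A2);
  rewrite ?(disjointFr d12 A1x) ?(disjointFr d21 A2x) ?andbT ?andbF ?orbF //=.
Qed.

Lemma bigminn_le (I : finType) (P : pred I) (F : I -> nat) d i :
  P i -> \big[minn/d]_(j | P j) F j <= F i.
Proof. exact: (@Order.TotalTheory.bigmin_le_cond _ nat I d i P F). Qed.

Lemma bigminn_attained (I : finType) (P : pred I) (F : I -> nat) d :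
  \big[minn/d]_(i | P i) F i < d -> exists2 i, P i & \big[minn/d]_(i | P i) F i = F i.
Proof.
elim/big_ind: _ => [|m n IHm IHn|i Pi _]; [by rewrite ltnn | | by exists i].
by rewrite /minn; case: ifP.
Qed.

Section PerfectMatching.
Variables (T : finType) (e : rel T).
Implicit Types (W U : {set T}).

Lemma perfect_matching0 : has_perfect_matching e set0.
Proof.
apply/existsP; exists set0; rewrite partition_set0 eqxx /=.
by apply/forall_inP => m; rewrite inE.
Qed.

Lemma perfect_matching_pair a b : a != b -> e a b -> has_perfect_matching e [set a; b].
Proof.
move=> neq_ab eab; apply/existsP; exists [set [set a; b]].
rewrite /partition cover1 eqxx trivIset1 inE eq_sym -card_gt0 cards2 neq_ab /=.
apply/forall_inP => m; rewrite inE => /eqP->.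
by apply/existsP; exists a; apply/existsP; exists b; rewrite neq_ab eab eqxx.
Qed.

Lemma perfect_matchingU W1 W2 : [disjoint W1 & W2] ->
  has_perfect_matching e W1 -> has_perfect_matching e W2 ->
  has_perfect_matching e (W1 :|: W2).
Proof.
move=> dis12 /existsP[M1 /andP[P1 E1]] /existsP[M2 /andP[P2 E2]].
apply/existsP; exists (M1 :|: M2); apply/andP; split.
  case/and3P: P1 => /eqP cov1 triv1 nil1; case/and3P: P2 => /eqP cov2 triv2 nil2.
  rewrite /partition /cover bigcup_setU -/(cover M1) -/(cover M2) cov1 cov2 eqxx.
  by rewrite inE negb_or nil1 nil2 trivIsetU // cov1 cov2.
by apply/forall_inP => m /setUP[/(forall_inP E1)|/(forall_inP E2)].
Qed.

Lemma perfect_matchingW (e' : rel T) W :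
  {in W &, subrel e e'} -> has_perfect_matching e W -> has_perfect_matching e' W.
Proof.
move=> ee' /existsP[M /andP[PM EM]]; apply/existsP; exists M; rewrite PM /=.
apply/forall_inP => m mM; have /subsetP mW := partitionS PM mM.
have /existsP[x /existsP[y /and3P[neq_xy exy /eqP me]]] := forall_inP EM m mM.
apply/existsP; exists x; apply/existsP; exists y; rewrite neq_xy me eqxx andbT.
by apply: ee' exy; apply: mW; rewrite me !inE eqxx ?orbT.
Qed.

(* Keep the blocks of the matching that lie inside U; the vertices of U they miss
   are matched across the boundary of U. *)
Lemma perfect_matching_restrict W U : symmetric e -> has_perfect_matching e W ->
  exists2 Y : {set T}, Y \subset W :&: U &
    has_perfect_matching e ((W :&: U) :\: Y) /\
    {in Y, forall x, exists2 y, y \notin U & e x y}.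
Proof.
move=> esym /existsP[M /andP[PM EM]].
have covMU : cover (M ::&: U) \subset W :&: U.
  by rewrite -(cover_partition PM) cover_setI.
exists ((W :&: U) :\: cover (M ::&: U)); first exact: subsetDl.
split.
  rewrite setDDr setDv set0U (setIidPr covMU); apply/existsP; exists (M ::&: U).
  have subM : M ::&: U \subset M by apply/subsetP => m; rewrite inE => /andP[].
  rewrite /partition eqxx (trivIsetS subM (partition_trivIset PM)).
  rewrite (contra (subsetP subM _)) ?(partition0 PM) //=.
  by apply/forall_inP => m /(subsetP subM) /(forall_inP EM).
move=> x /setDP[/setIP[xW xU] xnC].
have /bigcupP[m mM xm] : x \in cover M by rewrite (cover_partition PM).
have mnU : ~~ (m \subset U).
  by apply: contra xnC => mU; apply/bigcupP; exists m; rewrite // inE mM.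
have /existsP[a /existsP[b /and3P[_ eab /eqP me]]] := forall_inP EM m mM.
move: xm mnU; rewrite me subUset !sub1set !inE => /orP[]/eqP xE; subst x.
  by rewrite xU => bnU; exists b.
by rewrite xU andbT => anU; exists a; rewrite // esym.
Qed.

End PerfectMatching.

Section DecompositionTree.
Variable T : finType.
Implicit Types (t u l r : dtree T).

Lemma hatV_node o l r : hatV (Node o l r) = hatV l :|: hatV r.
Proof. by apply/setP => x; rewrite !inE mem_cat. Qed.

Lemma hatTS_sub u : hatTS u \subset hatV u.
Proof.
elim: u => [x|o l sl r sr]; first by rewrite /hatV sub1set !inE.
by rewrite hatV_node; case: o => /=; rewrite ?setUSS // subsetU ?sl.
Qed.

Lemma hatTS_neq0 u : hatTS u != set0.
Proof.
elim: u => [x|[] l nl r nr] /=; first by apply/set0Pn; exists x; rewrite inE.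
all: by rewrite // -!card_gt0 in nl *; apply: leq_trans nl (subset_leq_card (subsetUl _ _)).
Qed.

Lemma hatTS_node_sub o l r : hatTS (Node o l r) \subset hatTS l :|: hatTS r.
Proof. by case: o => //=; apply: subsetUl. Qed.

Lemma hatTS_twin o l r : o <> Oplus -> hatTS (Node o l r) = hatTS l :|: hatTS r.
Proof. by case: o. Qed.

Lemma hatE_sym u : symmetric (hatE u).
Proof.
elim: u => [z|o l sl r sr] x y //=.
by rewrite sl sr; congr [|| _, _ | _]; rewrite orbC.
Qed.

Lemma hatE_memV u x y : hatE u x y -> (x \in hatV u) && (y \in hatV u).
Proof.
elim: u => [z|o l IHl r IHr] //=; rewrite hatV_node !in_setU.
have /subsetP sl := hatTS_sub l; have /subsetP sr := hatTS_sub r.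
case/or3P => [/IHl/andP[-> ->] //|/IHr/andP[-> ->]|]; first by rewrite !orbT.
by case: o => //= /orP[]/andP[/sl-> /sr->]; rewrite ?orbT.
Qed.

Lemma hatE_nodel o l r : subrel (hatE l) (hatE (Node o l r)).
Proof. by move=> x y /= ->. Qed.

Lemma hatE_noder o l r : subrel (hatE r) (hatE (Node o l r)).
Proof. by move=> x y /= ->; rewrite orbT. Qed.

Lemma hatE_join o l r x y : o <> Odot -> x \in hatTS l -> y \in hatTS r ->
  hatE (Node o l r) x y.
Proof. by case: o => //= _ -> ->; rewrite !orbT. Qed.

Lemma disjoint_children o l r : uniq (leaves (Node o l r)) -> [disjoint hatV l & hatV r].
Proof.
rewrite /= cat_uniq => /and3P[_ nhas _].
have eqVr : hatV r =i leaves r by move=> x; rewrite inE.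
rewrite disjoint_sym (eq_disjoint eqVr) disjoint_has.
by apply: contra nhas => /hasP[x xr xl]; apply/hasP; exists x; rewrite ?inE in xl *.
Qed.

Lemma uniq_children o l r : uniq (leaves (Node o l r)) -> uniq (leaves l) /\ uniq (leaves r).
Proof. by rewrite /= cat_uniq => /and3P[-> _ ->]. Qed.

Lemma is_node_uniq t u : is_node u t -> uniq (leaves t) -> uniq (leaves u).
Proof.
elim: t => [x|o l IHl r IHr] [-> //|]; first by [].
by case=> [ul|ur] /(@uniq_children o)[Ul Ur]; [exact: IHl | exact: IHr].
Qed.

End DecompositionTree.

Section Feasibility.
Variable T : finType.
Implicit Types (u l r : dtree T) (S : {set T}).

Definition dominates u S : bool :=
  hatV u :\: hatTS u \subset closed_nbhd (hatE u) (hatV u) S.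

Lemma closed_nbhdS (e e' : rel T) (V V' S S' : {set T}) :
  subrel e e' -> V \subset V' -> S \subset S' ->
  closed_nbhd e V S \subset closed_nbhd e' V' S'.
Proof.
move=> ee' /subsetP VV' /subsetP SS'; apply/subsetP => x.
rewrite !inE => /orP[/SS'-> //|/andP[/VV'-> /exists_inP[y /SS' yS' /ee' exy]]].
by apply/orP; right; apply/exists_inP; exists y.
Qed.

Lemma closed_nbhd_adj (e : rel T) (V S : {set T}) x y :
  x \in V -> y \in S -> e x y -> x \in closed_nbhd e V S.
Proof. by rewrite !inE => -> yS exy; apply/orP; right; apply/exists_inP; exists y. Qed.

Lemma feasible0E u S :
  feasible u 0 S = [&& S \subset hatV u, dominates u S & has_perfect_matching (hatE u) S].
Proof.
rewrite /feasible; congr [&& _, _ & _]; apply/existsP/idP => [[X]|pmS].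
  by case/and3P => _ /eqP/cards0_eq-> ; rewrite setD0.
by exists set0; rewrite sub0set cards0 setD0 pmS.
Qed.

Lemma dominates_node o l r Sl Sr S : dominates l Sl -> dominates r Sr ->
  Sl :|: Sr \subset S ->
  (hatV l :\: hatTS l) :|: (hatV r :\: hatTS r) \subset
    closed_nbhd (hatE (Node o l r)) (hatV (Node o l r)) S.
Proof.
move=> doml domr /subUsetP[slS srS]; rewrite hatV_node subUset.
apply/andP; split; [apply: subset_trans doml _ | apply: subset_trans domr _].
  exact/closed_nbhdS/slS/subsetUl/hatE_nodel.
exact/closed_nbhdS/srS/subsetUr/hatE_noder.
Qed.

Lemma dominates_twin o l r Sl Sr S : o <> Oplus ->
  dominates l Sl -> dominates r Sr -> Sl :|: Sr \subset S -> dominates (Node o l r) S.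
Proof.
move=> twin doml domr sS; apply: subset_trans (dominates_node o doml domr sS).
by rewrite hatTS_twin // hatV_node setDUl !setDUr setUSS // subIset ?subxx ?orbT.
Qed.

(* At an attachment node the twins of [r] stop being twins and must be dominated. *)
Lemma dominates_oplus l r Sl Sr S : dominates l Sl -> dominates r Sr ->
  Sl :|: Sr \subset S ->
  hatTS r \subset closed_nbhd (hatE (Node Oplus l r)) (hatV (Node Oplus l r)) S ->
  dominates (Node Oplus l r) S.
Proof.
move=> doml domr sS domTr; rewrite /dominates.
apply: (subset_trans (B := (hatV l :\: hatTS l) :|: (hatV r :\: hatTS r) :|: hatTS r)).
  apply/subsetP => x; rewrite hatV_node /= !(in_setD, in_setU).
  by case/andP => ->; case: (x \in hatTS r); rewrite ?orbT ?orbF.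
by rewrite subUset (dominates_node _ doml domr sS).
Qed.

Lemma closed_nbhd_join o l r S a : o <> Odot -> a \in S -> a \in hatTS l ->
  hatTS r \subset closed_nbhd (hatE (Node o l r)) (hatV (Node o l r)) S.
Proof.
move=> join aS aT; apply/subsetP => y yT; apply: (closed_nbhd_adj _ aS).
  by rewrite hatV_node inE (subsetP (hatTS_sub r)) ?orbT.
by rewrite hatE_sym hatE_join.
Qed.

Lemma perfect_matching_node o l r (Wl Wr : {set T}) : [disjoint Wl & Wr] ->
  has_perfect_matching (hatE l) Wl -> has_perfect_matching (hatE r) Wr ->
  has_perfect_matching (hatE (Node o l r)) (Wl :|: Wr).
Proof.
move=> disjW pml pmr; apply: perfect_matchingU disjW _ _.
  by apply: perfect_matchingW pml => x y _ _; apply: hatE_nodel.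
by apply: perfect_matchingW pmr => x y _ _; apply: hatE_noder.
Qed.

Lemma feasible_twinU o l r k1 k2 Sl Sr : o <> Oplus -> [disjoint hatV l & hatV r] ->
  feasible l k1 Sl -> feasible r k2 Sr -> feasible (Node o l r) (k1 + k2) (Sl :|: Sr).
Proof.
move=> twin disj /and3P[sl doml /existsP[Xl /and3P[sXl /eqP <- pml]]].
move=> /and3P[sr domr /existsP[Xr /and3P[sXr /eqP <- pmr]]].
have /subsetIP[XSl _] := sXl; have /subsetIP[XSr _] := sXr.
have disjS : [disjoint Sl & Sr] by apply: disjointW disj.
apply/and3P; split; first by rewrite hatV_node setUSS.
  exact: dominates_twin doml domr (subxx _).
apply/existsP; exists (Xl :|: Xr); rewrite hatTS_twin // subUset.
rewrite (subset_trans sXl (setISS (subsetUl _ _) (subsetUl _ _))).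
rewrite (subset_trans sXr (setISS (subsetUr _ _) (subsetUr _ _))).
rewrite cardsU_disjoint ?eqxx /=; last exact: disjointW XSl XSr disjS.
rewrite setDUU ?(disjointWr XSr disjS) 1?disjoint_sym ?(disjointWl XSl disjS) //.
exact: perfect_matching_node (disjointW (subsetDl _ _) (subsetDl _ _) disjS) pml pmr.
Qed.

Lemma feasible0_oplus l r Sl Sr : [disjoint hatV l & hatV r] ->
  feasible l 0 Sl -> feasible r 0 Sr -> exists S, feasible (Node Oplus l r) 0 S.
Proof.
rewrite !feasible0E => disj /and3P[sl doml pml] /and3P[sr domr pmr].
have disjS : [disjoint Sl & Sr] by apply: disjointW disj.
have pmU := perfect_matching_node Oplus disjS pml pmr.
have sU : Sl :|: Sr \subset hatV (Node Oplus l r) by rewrite hatV_node setUSS.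
have /set0Pn[a aT] := hatTS_neq0 l.
have al : a \in hatV l := subsetP (hatTS_sub l) a aT.
case: (boolP (a \in Sl)) => [aS|anS].
  exists (Sl :|: Sr); rewrite feasible0E sU pmU (dominates_oplus doml domr) //.
  by apply: (closed_nbhd_join r _ _ aT); rewrite ?inE ?aS.
case: (boolP (hatTS r \subset Sr)) => [TrS|/subsetPn[b bT bnS]].
  exists (Sl :|: Sr); rewrite feasible0E sU pmU (dominates_oplus doml domr) //.
  by apply: subset_trans TrS (subset_trans (subsetUr Sl Sr) (subsetUl _ _)).
have br : b \in hatV r := subsetP (hatTS_sub r) b bT.
have neq_ab : a != b by apply: contraTneq br => <-; rewrite (disjointFr disj al).
have anSr : a \notin Sr by apply/negP => /(subsetP sr)/(disjointFl disj); rewrite al.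
have bnSl : b \notin Sl by apply/negP => /(subsetP sl)/(disjointFr disj); rewrite br.
have disjab : [disjoint Sl :|: Sr & [set a; b]].
  by rewrite disjoint_sym disjoints_subset subUset !sub1set !inE !negb_or anS anSr bnS bnSl.
exists ((Sl :|: Sr) :|: [set a; b]); rewrite feasible0E.
rewrite subUset sU subUset !sub1set hatV_node !in_setU al br orbT /=.
rewrite (dominates_oplus doml domr) ?subsetUl ?(closed_nbhd_join r _ _ aT) ?inE ?eqxx ?orbT //=.
by apply: perfect_matchingU disjab pmU (perfect_matching_pair neq_ab _); apply: hatE_join.
Qed.

End Feasibility.

Lemma feasible0_exists (T : finType) (u : dtree T) :
  uniq (leaves u) -> exists S, feasible u 0 S.
Proof.
elim: u => [x|o l IHl r IHr] U.
  exists set0; rewrite feasible0E sub0set perfect_matching0 andbT.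
  by apply/subsetP => y; rewrite !inE andNb.
have disj := disjoint_children U; have [/IHl[Sl Fl] /IHr[Sr Fr]] := uniq_children U.
case: o {U} => [| |]; last exact: feasible0_oplus disj Fl Fr.
  by exists (Sl :|: Sr); apply: (feasible_twinU _ disj Fl Fr).
by exists (Sl :|: Sr); apply: (feasible_twinU _ disj Fl Fr).
Qed.

Section Restriction.
Variable T : finType.
Implicit Types (v c s : dtree T) (S X : {set T}).

(* What a child [c] of [v] satisfies, and all that restricting feasible sets of [v]
   to [c] needs. *)
Definition embeds c v : Prop :=
  [/\ hatV c \subset hatV v, hatTS v :&: hatV c \subset hatTS c,
      {in hatV c &, subrel (hatE v) (hatE c)} &
      forall x y, x \in hatV c -> y \notin hatV c -> hatE v x y -> x \in hatTS c].

Lemma embeds_child v c s : [disjoint hatV c & hatV s] ->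
  hatV c \subset hatV v -> hatTS v \subset hatTS c :|: hatTS s ->
  (forall x y, hatE v x y -> [|| hatE c x y, hatE s x y |
     (x \in hatTS c) && (y \in hatTS s) || (y \in hatTS c) && (x \in hatTS s)]) ->
  embeds c v.
Proof.
move=> disj sV sTS Ev; have /subsetP Ts := hatTS_sub s.
have cs x : x \in hatV c -> x \in hatV s -> False.
  by move=> xc; rewrite (disjointFr disj xc).
split=> // [| x y xc yc /Ev | x y xc ync /Ev].
- by apply/subsetP => x /setIP[/(subsetP sTS)/setUP[//|/Ts xs /cs/(_ xs)]].
- case/or3P => [//|/hatE_memV/andP[xs _]|/orP[]/andP[_ /Ts]] => [|ys|xs].
  + by case: (cs x xc xs).
  + by case: (cs y yc ys).
  + by case: (cs x xc xs).
- case/or3P => [/hatE_memV/andP[_ yc]|/hatE_memV/andP[xs _]|/orP[]/andP[// _ /Ts xs]].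
  + by rewrite yc in ync.
  + by case: (cs x xc xs).
  + by case: (cs x xc xs).
Qed.

Lemma embeds_children o l r : [disjoint hatV l & hatV r] ->
  embeds l (Node o l r) /\ embeds r (Node o l r).
Proof.
move=> disj; have Ecases x y : hatE (Node o l r) x y -> [|| hatE l x y, hatE r x y |
    (x \in hatTS l) && (y \in hatTS r) || (y \in hatTS l) && (x \in hatTS r)].
  by case/or3P => [e|e|/andP[_ e]]; apply/or3P; [exact: Or31|exact: Or32|exact: Or33].
split; [apply: (embeds_child (s := r)) | apply: (embeds_child (s := l))].
- exact: disj.
- by rewrite hatV_node subsetUl.
- exact: hatTS_node_sub.
- exact: Ecases.
- by rewrite disjoint_sym.
- by rewrite hatV_node subsetUr.
- by rewrite setUC hatTS_node_sub.
move=> x y /Ecases/or3P[->|->|/orP[]/andP[-> ->]]; by rewrite ?orbT.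
Qed.

Section Embedded.
Variables c v : dtree T.
Hypothesis cv : embeds c v.

Lemma dominates_restrict S : dominates v S -> dominates c (S :&: hatV c).
Proof.
case: cv => sV sTS inside leaving domv; apply/subsetP => w /setDP[wc wnT].
have wv : w \in hatV v :\: hatTS v.
  rewrite inE (subsetP sV _ wc) andbT; apply: contra wnT => wT.
  by apply: (subsetP sTS); rewrite inE wT.
case/setUP: (subsetP domv w wv) => [wS|]; first by apply/setUP; left; rewrite inE wS.
rewrite inE => /andP[_ /exists_inP[y yS ewy]].
have yc : y \in hatV c by apply: contraNT wnT => ync; exact: leaving _ _ wc ync ewy.
by apply: (closed_nbhd_adj (y := y) wc); [rewrite inE yS | apply: inside].
Qed.

(* The vertices of V(c) matched outside V(c) lie in TS(c) and join the unmatched part. *)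
Lemma feasible_restrict S X : dominates v S -> X \subset S :&: hatTS v ->
  has_perfect_matching (hatE v) (S :\: X) ->
  exists2 k, #|X :&: hatV c| <= k & feasible c k (S :&: hatV c).
Proof.
move=> domv sX pmv; case: (cv) => _ sTS inside leaving.
have [Y sY [pmY crossY]] := perfect_matching_restrict (hatV c) (@hatE_sym _ v) pmv.
exists #|(X :&: hatV c) :|: Y|; first exact/subset_leq_card/subsetUl.
apply/and3P; split; [exact: subsetIr | exact: dominates_restrict |].
apply/existsP; exists ((X :&: hatV c) :|: Y); rewrite eqxx /=; apply/andP; split.
  rewrite subUset; apply/andP; split; apply/subsetP => x.
    case/setIP=> /(subsetP sX)/setIP[xS xT] xc.
    by rewrite !in_setI xS xc; apply: (subsetP sTS); rewrite inE xT.
  move=> xY; have /setIP[/setDP[xS _] xc] := subsetP sY x xY.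
  have [y ync exy] := crossY x xY.
  by rewrite !in_setI xS xc (leaving _ _ xc ync exy).
have -> : (S :&: hatV c) :\: ((X :&: hatV c) :|: Y) = ((S :\: X) :&: hatV c) :\: Y.
  apply/setP => x; rewrite !(in_setD, in_setI, in_setU).
  by case: (x \in X); case: (x \in Y); case: (x \in S); case: (x \in hatV c).
apply: perfect_matchingW pmY => x y /setDP[/setIP[_ xc] _] /setDP[/setIP[_ yc] _].
exact: inside.
Qed.

End Embedded.

Lemma feasible_split o l r k S : [disjoint hatV l & hatV r] ->
  feasible (Node o l r) k S -> exists k1 k2,
    [/\ k <= k1 + k2, feasible l k1 (S :&: hatV l) & feasible r k2 (S :&: hatV r)].
Proof.
move=> disj /and3P[_ domv /existsP[X /and3P[sX /eqP <- pmX]]].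
have [el er] := embeds_children o disj.
have [k1 le1 F1] := feasible_restrict el domv sX pmX.
have [k2 le2 F2] := feasible_restrict er domv sX pmX.
exists k1, k2; split => //.
have XV : X \subset hatV l :|: hatV r.
  rewrite -(hatV_node o); apply: subset_trans sX (subset_trans (subsetIr _ _) _).
  exact: hatTS_sub.
by rewrite (card_setI_split XV disj) leq_add.
Qed.

End Restriction.


Section Extremal.
Variables (T : finType) (u : dtree T).
Implicit Types (S : {set T}).

Lemma feasible_le_card k S : feasible u k S -> k <= #|hatTS u|.
Proof.
case/and3P => _ _ /existsP[X /and3P[sX /eqP <- _]].
exact/subset_leq_card/(subset_trans sX)/subsetIr.
Qed.

Lemma gammak_le k S : feasible u k S -> gammak u k <= #|S|.
Proof. exact: bigminn_le. Qed.

Lemma hmin_le_gammak k : k <= #|hatTS u| -> hmin u <= gammak u k.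
Proof. by move=> le_k; apply: (bigminn_le _ _ (i := Ordinal (le_k : k < #|hatTS u|.+1))). Qed.

Lemma hmin_le k S : feasible u k S -> hmin u <= #|S|.
Proof. by move=> F; rewrite (leq_trans (hmin_le_gammak (feasible_le_card F))) ?gammak_le. Qed.

Lemma hbeta_ge k S : feasible u k S -> #|S| = hmin u -> k <= hbeta u.
Proof.
move=> F eS; have le_k := feasible_le_card F; rewrite -ltnS in le_k.
have -> : k = Ordinal le_k by [].
apply: leq_bigmax_cond; rewrite eqn_leq hmin_le_gammak // andbT -eS.
exact: gammak_le.
Qed.

(* The hypothesis excludes the junk value [#|T|.+1] of [hmin u]. *)
Lemma hbeta_attained : (exists S, feasible u 0 S) ->
  exists2 S, feasible u (hbeta u) S & #|S| = hmin u.
Proof.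
case=> S0 F0; have hmin_fin : hmin u < #|T|.+1.
  by rewrite ltnS (leq_trans (hmin_le F0)) ?max_card.
have [k _ gk] := bigminn_attained hmin_fin.
have gbeta : gammak u (hbeta u) = hmin u.
  rewrite /hbeta (bigmax_eq_arg k) /=; last by rewrite -gk.
  by case: arg_maxnP => [|i /eqP]; rewrite // -gk.
have [|S FS eS] := @bigminn_attained _ (feasible u (hbeta u)) (fun S => #|S|) #|T|.+1.
  by rewrite -/(gammak u _) gbeta.
by exists S; rewrite // -gbeta.
Qed.

End Extremal.

Lemma hbeta_twin (T : finType) o (l r : dtree T) : o <> Oplus ->
  uniq (leaves (Node o l r)) -> hbeta (Node o l r) = hbeta l + hbeta r.
Proof.
move=> twin U; have disj := disjoint_children U; have [Ul Ur] := uniq_children U.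
have [Sl Fl eSl] := hbeta_attained (feasible0_exists Ul).
have [Sr Fr eSr] := hbeta_attained (feasible0_exists Ur).
have [Sv Fv eSv] := hbeta_attained (feasible0_exists U).
have [k1 [k2 [le_k Fl' Fr']]] := feasible_split disj Fv.
have FU := feasible_twinU twin disj Fl Fr.
have cardU : #|Sl :|: Sr| = hmin l + hmin r.
  case/and3P: Fl => sl _ _; case/and3P: Fr => sr _ _.
  by rewrite cardsU_disjoint ?eSl ?eSr //; apply: disjointW sl sr disj.
have cardSv : #|Sv| = #|Sv :&: hatV l| + #|Sv :&: hatV r|.
  by case/and3P: Fv; rewrite hatV_node => sv _ _; apply: card_setI_split sv disj.
have := hmin_le FU; have := hmin_le Fl'; have := hmin_le Fr'.
rewrite cardU -eSv cardSv => hr hl hv.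
have minl : #|Sv :&: hatV l| = hmin l by lia.
have minr : #|Sv :&: hatV r| = hmin r by lia.
have minv : #|Sl :|: Sr| = hmin (Node o l r) by lia.
have := hbeta_ge Fl' minl; have := hbeta_ge Fr' minr; have := hbeta_ge FU minv.
lia.
Qed.

Theorem lemma9 (T : finType) (G : rel T) (t vl vr : dtree T) :
  simple_graph G -> dist_hereditary G -> decomp_tree G t ->
  is_node (Node Otimes vl vr) t ->
  propP vl -> propP vr ->
  hbeta (Node Otimes vl vr) = hbeta vl + hbeta vr.
Proof.
move=> _ _ [uniq_t _] node _ _.
by apply: hbeta_twin (is_node_uniq node uniq_t).
Qed.
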